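(* (1) For $\mathcal{T}\in\mathbb{T}_k$, $\mathcal{T}'\in\mathbb{T}_l$, $$R_{\mathcal{T}}.R_{\mathcal{T}'}=\sum_{\substack{\mathcal{T}''\in\mathbb{T}_{k+l}\\ \mathcal{T}''_{\mid[k]}=\mathcal{T},\ \mathrm{Std}(\mathcal{T}''_{\mid[k+l]\setminus[k]})=\mathcal{T}'}}R_{\mathcal{T}''}.$$ (2) For $\mathcal{T}\in\mathbb{T}_k$, $\mathcal{T}'\in\mathbb{T}_l$, $$R_{\mathcal{T}}\downarrow R_{\mathcal{T}'}=\sum_{\substack{\mathcal{T}''\in\mathbb{T}_{k+l}\\ \mathcal{T}''_{\mid[k]}=\mathcal{T},\ \mathrm{Std}(\mathcal{T}''_{\mid[k+l]\setminus[k]})=\mathcal{T}',\\ [k]\leq_{\mathcal{T}''}[k+l]\setminus[k]}}R_{\mathcal{T}''}.$$ (3) For $\mathcal{T}\in\mathbb{T}_n$, $$\Delta(R_{\mathcal{T}})=\sum_{\substack{O\in\mathcal{T}\\ [n]\setminus O<_{\mathcal{T}}O}}R_{\mathrm{Std}(\mathcal{T}_{\mid[n]\setminus O})}\otimes R_{\mathrm{Std}(\mathcal{T}_{\mid O})}.$$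
   Context: Let $K$ be a field. For $n\geq0$, $[n]=\{1,\ldots,n\}$, $\mathbb{T}_n$ is the set of topologies on $[n]$, $\mathcal{H}_{\mathbb{T}}$ the $K$-vector space with basis $\bigsqcup_n\mathbb{T}_n$. For a topology $\mathcal{T}$ on finite $X$: $i\leq_{\mathcal{T}}j$ iff every open set containing $i$ contains $j$; $i<_{\mathcal{T}}j$ iff $i\leq_{\mathcal{T}}j$ and not $j\leq_{\mathcal{T}}i$. For $I,J\subseteq X$, $I\leq_{\mathcal{T}}J$ means $i\leq_{\mathcal{T}}j$ for all $i\in I,j\in J$, and $I<_{\mathcal{T}}J$ means $i<_{\mathcal{T}}j$ for all $i\in I,j\in J$ (vacuous if $I$ or $J$ is empty). For $Y\subseteq X$, $\mathcal{T}_{\mid Y}=\{O\cap Y\mid O\in\mathcal{T}\}$; if $X$ is totally ordered of size $m$, $\mathrm{Std}(\mathcal{T})\in\mathbb{T}_m$ is the transport along the increasing bijection $X\to[m]$. For $O\subseteq\mathbb{N}$, $O(+n)=\{k+n\mid k\in O\}$. Bilinear products: for $\mathcal{T}\in\mathbb{T}_n,\mathcal{T}'\in\mathbb{T}_{n'}$, $\mathcal{T}.\mathcal{T}'$ is the topology on $[n+n']$ with open sets $O\sqcup O'(+n)$, and $\mathcal{T}\downarrow\mathcal{T}'$ the topology with open sets $O\sqcup[n'](+n)$ and $O'(+n)$ ($O\in\mathcal{T},O'\in\mathcal{T}'$). Coproduct $\Delta(\mathcal{T})=\sum_{O\in\mathcal{T}}\mathrm{Std}(\mathcal{T}_{\mid[n]\setminus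 O})\otimes\mathrm{Std}(\mathcal{T}_{\mid O})$. $\mathbb{T}_n$ is partially ordered by refinement: $\mathcal{T}\leq\mathcal{T}'$ iff every open set of $\mathcal{T}$ is an open set of $\mathcal{T}'$. The ribbon basis $(R_{\mathcal{T}})$ of $\mathcal{H}_{\mathbb{T}}$ is defined by $\mathcal{T}=\sum_{\mathcal{T}'\in\mathbb{T}_n,\ \mathcal{T}'\leq\mathcal{T}}R_{\mathcal{T}'}$ for all $\mathcal{T}\in\mathbb{T}_n$, $n\geq0$ (equivalently via Möbius inversion). *)

From HB Require Import structures.
From mathcomp Require Import all_boot all_order all_algebra.
Set Implicit Arguments. Unset Strict Implicit. Unset Printing Implicit Defensive.
Import GRing.Theory.
Local Open Scope ring_scope.

(* A topology on [n] = 'I_n (0-based), given by its set of open sets. *)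
Definition is_topology n (T : {set {set 'I_n}}) : bool :=
  [&& set0 \in T, setT \in T &
      [forall O1 in T, forall O2 in T, (O1 :|: O2 \in T) && (O1 :&: O2 \in T)]].

Definition topo n := {T : {set {set 'I_n}} | is_topology T}.
Definition opens n (T : topo n) : {set {set 'I_n}} := val T.

Definition tle n (T : topo n) (i j : 'I_n) : bool :=
  [forall O in opens T, (i \in O) ==> (j \in O)].
Definition tlt n (T : topo n) (i j : 'I_n) : bool := tle T i j && ~~ tle T j i.
Definition setle n (T : topo n) (I J : {set 'I_n}) : bool :=
  [forall i in I, forall j in J, tle T i j].
Definition setlt n (T : topo n) (I J : {set 'I_n}) : bool :=
  [forall i in I, forall j in J, tlt T i j].

Definition refines n (T T' : topo n) : bool := opens T \subset opens T'.

(* is_std T Y B  <=>  Std(T_|Y) = B, i.e. B is the transport of the restricted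
   topology T_|Y = {O :&: Y | O in T} along the increasing bijection f : [m] -> Y. *)
Definition is_std n m (T : topo n) (Y : {set 'I_n}) (B : topo m) : bool :=
  [exists f : {ffun 'I_m -> 'I_n},
    [&& [forall i : 'I_m, forall j : 'I_m, (i < j)%N ==> (f i < f j)%N],
        f @: setT == Y &
        opens B == [set f @^-1: (O :&: Y) | O : {set 'I_n} in opens T]]].

(* Homogeneous component of degree n of H_T: K-linear combinations of T_n. *)
Notation Hdeg K n := {ffun topo n -> K}.

Definition basis (K : fieldType) n (T : topo n) : Hdeg K n :=
  [ffun X => (X == T)%:R].

Definition concat_opens k l (T : topo k) (T' : topo l) : {set {set 'I_(k + l)}} :=
  [set (lshift l @: O) :|: (@rshift k l @: O') | O : {set 'I_k} in opens T, O' : {set 'I_l} in opens T'].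
Definition down_opens k l (T : topo k) (T' : topo l) : {set {set 'I_(k + l)}} :=
  [set (lshift l @: O) :|: (@rshift k l @: setT) | O : {set 'I_k} in opens T]
  :|: [set @rshift k l @: O' | O' : {set 'I_l} in opens T'].

Definition mulH (K : fieldType) k l (f : Hdeg K k) (g : Hdeg K l) : Hdeg K (k + l) :=
  [ffun X => \sum_(T : topo k) \sum_(T' : topo l)
              (opens X == concat_opens T T')%:R * f T * g T'].
Definition downH (K : fieldType) k l (f : Hdeg K k) (g : Hdeg K l) : Hdeg K (k + l) :=
  [ffun X => \sum_(T : topo k) \sum_(T' : topo l)
              (opens X == down_opens T T')%:R * f T * g T'].

(* Linear extension of the coproduct.  An element of H_T (x) H_T is represented by
   its coefficients on the basis A (x) B, A : topo i, B : topo j. *)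
Definition coprodH (K : fieldType) n (f : Hdeg K n) (i j : nat) : {ffun topo i * topo j -> K} :=
  [ffun AB => \sum_(T : topo n) f T *
      (#|[set O in opens T | is_std T (~: O) AB.1 && is_std T O AB.2]|)%:R].

Definition tensH (K : fieldType) i j (f : Hdeg K i) (g : Hdeg K j) : {ffun topo i * topo j -> K} :=
  [ffun AB => f AB.1 * g AB.2].

(* Each identity is an equality between two functions of T (or of (T, T')) whose
   sums over everything below T in the refinement order agree; as the number of
   open sets strictly grows along refinement, this determines them.  Summing the
   left-hand side turns ribbons into basis elements.  The product T.T' (resp.
   T (down) T') of basis elements is the sum of the ribbons U lying below it,
   and U lies below it exactly when the restrictions of U to [k] and to its
   complement lie below T and T' (and, for (down), [k] <=_U its complement).
   For the coproduct, fix an open set O: the S <= T in which O is open and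
   ~O <_S O correspond bijectively to pairs A <= T_|~O, B <= T_|O, the inverse
   map glueing A and B so that an open set meeting ~O must contain O. *)

From HB Require Import structures.
From mathcomp Require Import all_boot all_order all_algebra.
Import GRing.Theory.
Local Open Scope ring_scope.

Set Implicit Arguments. Unset Strict Implicit. Unset Printing Implicit Defensive.

Lemma ltn_ord_trans k : transitive (fun a b : 'I_k => (a < b)%N).
Proof. by move=> b a c; apply: ltn_trans. Qed.

Lemma sorted_enum_ord k : sorted (fun a b : 'I_k => (a < b)%N) (enum 'I_k).
Proof. by have := iota_ltn_sorted 0 k; rewrite -val_enum_ord sorted_map. Qed.

Lemma sorted_enum_set n (Y : {set 'I_n}) : sorted (fun a b : 'I_n => (a < b)%N) (enum Y).
Proof.
by rewrite /enum_mem -enumT; apply: sorted_filter (sorted_enum_ord n); apply: ltn_ord_trans.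
Qed.

Section IncreasingMaps.
Variables m n : nat.
Implicit Types f g : 'I_m -> 'I_n.

Lemma increasing_inj f : {homo f : i j / (i < j)%N} -> injective f.
Proof.
move=> f_incr i j fij; apply/val_inj.
by case: (ltngtP i j) => // /f_incr; rewrite fij ltnn.
Qed.

Lemma increasing_map_enum f :
  {homo f : i j / (i < j)%N} -> map f (enum 'I_m) = enum (f @: setT).
Proof.
move=> f_incr; apply: (@irr_sorted_eq _ (fun a b : 'I_n => (a < b)%N)).
- exact: ltn_ord_trans.
- by move=> a; rewrite ltnn.
- exact: (@homo_sorted _ _ f (fun a b : 'I_m => (a < b)%N) _ f_incr _ (sorted_enum_ord m)).
- exact: sorted_enum_set.
move=> y; rewrite mem_enum; apply/mapP/imsetP => [[i _ ->]|[i _ ->]]; exists i => //.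
by rewrite mem_enum.
Qed.

Lemma increasing_eq f g : {homo f : i j / (i < j)%N} -> {homo g : i j / (i < j)%N} ->
  f @: setT = g @: setT -> f =1 g.
Proof.
move=> f_incr g_incr fg i.
have /eq_in_map : map f (enum 'I_m) = map g (enum 'I_m).
  by rewrite !increasing_map_enum // fg.
by apply; rewrite mem_enum.
Qed.

End IncreasingMaps.

Lemma increasing_enumeration n m (Y : {set 'I_n}) :
  #|Y| = m -> exists2 f : 'I_m -> 'I_n, {homo f : i j / (i < j)%N} & f @: setT = Y.
Proof.
move=> <-; exists (fun i => enum_val i) => [i j lt|].
  rewrite (enum_val_nth (enum_val i) i) (enum_val_nth (enum_val i) j).
  apply: (sorted_ltn_nth (leT := fun a b : 'I_n => (a < b)%N)) (sorted_enum_set Y) _ _ _ _ lt.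
  - exact: ltn_ord_trans.
  - by rewrite inE -cardE.
  - by rewrite inE -cardE.
apply/setP => y; apply/imsetP/idP => [[i _ ->]|yY]; first exact: enum_valP.
by exists (enum_rank_in yY y); rewrite ?inE // enum_rankK_in.
Qed.

Section Topologies.
Variables (n : nat) (T : topo n).

Lemma opens0 : set0 \in opens T. Proof. by have /and3P [] := valP T. Qed.
Lemma opensT : setT \in opens T. Proof. by have /and3P [] := valP T. Qed.

Lemma opensUI A B : A \in opens T -> B \in opens T ->
  (A :|: B \in opens T) && (A :&: B \in opens T).
Proof. by have /and3P [_ _ /forall_inP UI] := valP T => /UI /forall_inP; apply. Qed.

Lemma opensU A B : A \in opens T -> B \in opens T -> A :|: B \in opens T.
Proof. by move=> hA /(opensUI hA) /andP []. Qed.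

Lemma opensI A B : A \in opens T -> B \in opens T -> A :&: B \in opens T.
Proof. by move=> hA /(opensUI hA) /andP []. Qed.

End Topologies.

Lemma is_topologyI n (X : {set {set 'I_n}}) :
  set0 \in X -> setT \in X ->
  (forall A B, A \in X -> B \in X -> (A :|: B \in X) && (A :&: B \in X)) -> is_topology X.
Proof.
move=> X0 XT XUI; rewrite /is_topology X0 XT /=.
by apply/forall_inP => A hA; apply/forall_inP => B hB; apply: XUI.
Qed.

Lemma opens_inj n : injective (@opens n).
Proof. exact: val_inj. Qed.

Lemma refines_refl n (T : topo n) : refines T T.
Proof. exact: subxx. Qed.

Lemma refines_card n (T T' : topo n) : refines T T' -> T != T' -> (#|opens T| < #|opens T'|)%N.
Proof.
move=> TT' neq; apply: proper_card; rewrite properEneq [_ \subset _]TT' andbT.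
by apply: contra neq => /eqP /opens_inj ->.
Qed.

Definition induced_opens n m (f : 'I_m -> 'I_n) (T : topo n) : {set {set 'I_m}} :=
  [set f @^-1: V | V : {set 'I_n} in opens T].

Lemma induced_is_topology n m (f : 'I_m -> 'I_n) (T : topo n) : is_topology (induced_opens f T).
Proof.
apply: is_topologyI.
- by apply/imsetP; exists set0; [exact: opens0 | rewrite preimset0].
- by apply/imsetP; exists setT; [exact: opensT | rewrite preimsetT].
move=> A B /imsetP [V hV ->] /imsetP [W hW ->]; apply/andP; split; apply/imsetP.
  by exists (V :|: W); [exact: opensU | rewrite preimsetU].
by exists (V :&: W); [exact: opensI | rewrite preimsetI].
Qed.

Definition induced n m (f : 'I_m -> 'I_n) (T : topo n) : topo m :=
  exist _ (induced_opens f T) (induced_is_topology f T).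

Lemma refines_inducedE n m (f : 'I_m -> 'I_n) (U : topo n) (T : topo m) :
  refines (induced f U) T = [forall V in opens U, f @^-1: V \in opens T].
Proof.
apply/subsetP/forall_inP => [UT V hV|UT W]; first by apply: UT; apply: imset_f.
by case/imsetP => V hV ->; apply: UT.
Qed.

Lemma induced_refines n m (f : 'I_m -> 'I_n) (S T : topo n) :
  refines S T -> refines (induced f S) (induced f T).
Proof.
by move=> ST; rewrite refines_inducedE; apply/forall_inP => V /(subsetP ST); apply: imset_f.
Qed.

Section Standardization.
Variables (n m : nat) (T : topo n) (Y : {set 'I_n}).

Lemma is_std_card (B : topo m) : is_std T Y B -> #|Y| = m.
Proof.
case/existsP => g /and3P [/forallP g_incr /eqP <- _].
rewrite card_imset ?cardsT ?card_ord //; apply: increasing_inj => i j.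
exact: (implyP (forallP (g_incr i) j)).
Qed.

Lemma is_std_induced (B : topo m) (f : 'I_m -> 'I_n) :
  {homo f : i j / (i < j)%N} -> f @: setT = Y -> is_std T Y B = (B == induced f T).
Proof.
move=> f_incr fY; apply/idP/eqP => [|->].
  case/existsP => g /and3P [/forallP g_incr /eqP gY /eqP oB].
  have fg : f =1 g.
    apply: increasing_eq => // [i j|]; first exact: (implyP (forallP (g_incr i) j)).
    by rewrite fY -gY; apply: eq_imset.
  apply/opens_inj; rewrite oB; apply: eq_imset => V; apply/setP => x.
  by rewrite !inE -fg -fY imset_f ?inE ?andbT.
apply/existsP; exists [ffun x => f x]; apply/and3P; split.
- by apply/forallP => i; apply/forallP => j; apply/implyP => lt; rewrite !ffunE f_incr.
- by rewrite -fY; apply/eqP; apply: eq_imset => x; rewrite ffunE.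
apply/eqP; apply: eq_imset => V; apply/setP => x.
by rewrite !inE ffunE -fY imset_f ?inE ?andbT.
Qed.

Lemma is_std_card_neq (B : topo m) : #|Y| != m -> is_std T Y B = false.
Proof. by apply: contraNF => /is_std_card ->. Qed.

End Standardization.

(* The uniqueness half of Moebius inversion. *)
Lemma sum_below_inj (I : finType) (V : zmodType) (le : rel I) (mu : I -> nat)
    (le_refl : reflexive le) (mu_lt : forall x y, le x y -> x != y -> (mu x < mu y)%N)
    (G F : I -> V) :
  (forall y, \sum_(x | le x y) G x = \sum_(x | le x y) F x) -> G =1 F.
Proof.
move=> sumGF; suff GF k y : (mu y < k)%N -> G y = F y by move=> y; apply: (GF (mu y).+1).
elim: k y => [//|k IHk] y; rewrite ltnS => mu_y.
have := sumGF y; rewrite (bigD1 y) ?le_refl //= [in RHS](bigD1 y) ?le_refl //=.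
rewrite (eq_bigr F) => [/addIr //|x /andP [le_xy neq_xy]].
exact/IHk/(leq_trans (mu_lt _ _ le_xy neq_xy)).
Qed.

Section Shifts.
Variables k l : nat.

Lemma lshift_increasing : {homo @lshift k l : i j / (i < j)%N}.
Proof. by []. Qed.

Lemma rshift_increasing : {homo @rshift k l : i j / (i < j)%N}.
Proof. by move=> i j; rewrite /= ltn_add2l. Qed.

Lemma imset_lshiftT : lshift l @: setT = [set i : 'I_(k + l) | (i < k)%N].
Proof.
apply/setP => x; rewrite inE; apply/imsetP/idP => [[y _ ->]|x_lt]; first exact: (ltn_ord y).
by exists (Ordinal x_lt); rewrite ?inE //; apply: val_inj.
Qed.

Lemma imset_rshiftT : @rshift k l @: setT = [set i : 'I_(k + l) | (k <= i)%N].
Proof.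
apply/setP => x; rewrite inE; apply/imsetP/idP => [[y _ ->]|k_le]; first exact: leq_addr.
have x_lt : (x - k < l)%N by rewrite ltn_subLR // ltn_ord.
by exists (Ordinal x_lt); rewrite ?inE //; apply: val_inj; rewrite /= subnKC.
Qed.

Lemma is_std_lshift (U : topo (k + l)) (T : topo k) :
  is_std U [set i : 'I_(k + l) | (i < k)%N] T = (T == induced (lshift l) U).
Proof. exact: is_std_induced lshift_increasing imset_lshiftT. Qed.

Lemma is_std_rshift (U : topo (k + l)) (T : topo l) :
  is_std U [set i : 'I_(k + l) | (k <= i)%N] T = (T == induced (@rshift k l) U).
Proof. exact: is_std_induced rshift_increasing imset_rshiftT. Qed.

Lemma lshift_or_rshift (x : 'I_(k + l)) :
  (exists j, x = lshift l j) \/ (exists j, x = @rshift k l j).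
Proof. by rewrite -(splitK x); case: (split x) => j; [left | right]; exists j. Qed.

Lemma mem_imset_lshift (j : 'I_k) (O : {set 'I_k}) : (lshift l j \in lshift l @: O) = (j \in O).
Proof. exact/mem_imset/lshift_inj. Qed.

Lemma mem_imset_rshift (j : 'I_l) (O : {set 'I_l}) :
  (@rshift k l j \in @rshift k l @: O) = (j \in O).
Proof. exact/mem_imset/rshift_inj. Qed.

Lemma lshift_notin_rshift (j : 'I_k) (O : {set 'I_l}) : (lshift l j \in @rshift k l @: O) = false.
Proof.
by apply/imsetP => -[i _ /(congr1 val) /= ji]; have := ltn_ord j; rewrite ji ltnNge leq_addr.
Qed.

Lemma rshift_notin_lshift (j : 'I_l) (O : {set 'I_k}) : (@rshift k l j \in lshift l @: O) = false.
Proof.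
by apply/imsetP => -[i _ /(congr1 val) /= ij]; have := ltn_ord i; rewrite -ij ltnNge leq_addr.
Qed.

Definition mem_imset_shift :=
  (mem_imset_lshift, mem_imset_rshift, lshift_notin_rshift, rshift_notin_lshift).

Lemma preimset_lshift_cat (O : {set 'I_k}) (O' : {set 'I_l}) :
  lshift l @^-1: (lshift l @: O :|: @rshift k l @: O') = O.
Proof. by apply/setP => x; rewrite !inE !mem_imset_shift orbF. Qed.

Lemma preimset_rshift_cat (O : {set 'I_k}) (O' : {set 'I_l}) :
  @rshift k l @^-1: (lshift l @: O :|: @rshift k l @: O') = O'.
Proof. by apply/setP => x; rewrite !inE !mem_imset_shift. Qed.

Lemma cat_preimset_shift (V : {set 'I_(k + l)}) :
  V = lshift l @: (lshift l @^-1: V) :|: @rshift k l @: (@rshift k l @^-1: V).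
Proof.
by apply/setP => x; case: (lshift_or_rshift x) => -[j ->]; rewrite !inE !mem_imset_shift !inE ?orbF.
Qed.

Lemma concat_opensE (T : topo k) (T' : topo l) :
  concat_opens T T' = [set V : {set 'I_(k + l)} |
    (lshift l @^-1: V \in opens T) && (@rshift k l @^-1: V \in opens T')].
Proof.
apply/setP => V; rewrite inE; apply/imset2P/andP => [[O O' hO hO' ->]|[hL hR]].
  by rewrite preimset_lshift_cat preimset_rshift_cat.
by exists (lshift l @^-1: V) (@rshift k l @^-1: V) => //; apply: cat_preimset_shift.
Qed.

Lemma down_opensE (T : topo k) (T' : topo l) :
  down_opens T T' = [set V : {set 'I_(k + l)} |
    [&& lshift l @^-1: V \in opens T, @rshift k l @^-1: V \in opens T' &
        (lshift l @^-1: V != set0) ==> (@rshift k l @^-1: V == setT)]].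
Proof.
apply/setP => V; rewrite inE /down_opens inE.
apply/orP/and3P => [[/imsetP [O hO ->]|/imsetP [O' hO' ->]]|[hL hR down]].
- by rewrite preimset_lshift_cat preimset_rshift_cat eqxx implybT; split => //; apply: opensT.
- rewrite -[@rshift k l @: O']set0U -(imset0 (lshift l)).
  by rewrite preimset_lshift_cat preimset_rshift_cat eqxx; split => //; apply: opens0.
case: (lshift l @^-1: V =P set0) => [L0|/eqP L_neq0].
  right; apply/imsetP; exists (@rshift k l @^-1: V) => //.
  by rewrite {1}(cat_preimset_shift V) L0 imset0 set0U.
move: down; rewrite L_neq0 => /eqP RT; left; apply/imsetP; exists (lshift l @^-1: V) => //.
by rewrite {1}(cat_preimset_shift V) RT.
Qed.

Lemma down_condition_setle (U : topo (k + l)) :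
  [forall V in opens U, (lshift l @^-1: V != set0) ==> (@rshift k l @^-1: V == setT)] =
  setle U [set i : 'I_(k + l) | (i < k)%N] [set i : 'I_(k + l) | (k <= i)%N].
Proof.
apply/forall_inP/forall_inP => [down i|le_LR V hV].
  rewrite -imset_lshiftT => /imsetP [i' _ ->]; apply/forall_inP => j.
  rewrite -imset_rshiftT => /imsetP [j' _ ->]; apply/forall_inP => V hV; apply/implyP => i'V.
  have L_neq0 : lshift l @^-1: V != set0 by apply/set0Pn; exists i'; rewrite inE.
  have /eqP RT := implyP (down V hV) L_neq0.
  by have := in_setT j'; rewrite -RT inE.
apply/implyP => /set0Pn [i' i'V]; apply/eqP/setP => j'; rewrite !inE.
have i'L : lshift l i' \in [set i : 'I_(k + l) | (i < k)%N] by rewrite -imset_lshiftT imset_f.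
have j'R : @rshift k l j' \in [set i : 'I_(k + l) | (k <= i)%N] by rewrite -imset_rshiftT imset_f.
have /forall_inP /(_ _ j'R) /forall_inP /(_ V hV) /implyP := le_LR _ i'L; apply.
by rewrite inE in i'V.
Qed.

End Shifts.

Lemma subset_setE n (X : {set {set 'I_n}}) (P : pred {set 'I_n}) :
  (X \subset [set V | P V]) = [forall V in X, P V].
Proof.
by apply/subsetP/forall_inP => XP V /XP; rewrite inE.
Qed.

Lemma forall_in_andb (T : finType) (X : {pred T}) (P Q : pred T) :
  [forall x in X, P x && Q x] = [forall x in X, P x] && [forall x in X, Q x].
Proof.
apply/forall_inP/andP => [PQ|[/forall_inP P_X /forall_inP Q_X] x Xx].
  by split; apply/forall_inP => x /PQ /andP [].
by rewrite P_X ?Q_X.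
Qed.

Lemma down_condition_UI (I J : finType) (X1 X2 : {set I}) (Y1 Y2 : {set J}) :
  (X1 != set0) ==> (Y1 == setT) -> (X2 != set0) ==> (Y2 == setT) ->
  ((X1 :|: X2 != set0) ==> (Y1 :|: Y2 == setT)) && ((X1 :&: X2 != set0) ==> (Y1 :&: Y2 == setT)).
Proof.
move=> /implyP XY1 /implyP XY2; apply/andP; split; apply/implyP => X_neq0.
  case: (X1 =P set0) => [X1_0|/eqP /XY1 /eqP ->]; last by rewrite setTU.
  by move: X_neq0; rewrite X1_0 set0U => /XY2 /eqP ->; rewrite setUT.
case: (X1 =P set0) => [X1_0|/eqP /XY1 /eqP ->]; first by rewrite X1_0 set0I eqxx in X_neq0.
case: (X2 =P set0) => [X2_0|/eqP /XY2 /eqP ->]; first by rewrite X2_0 setI0 eqxx in X_neq0.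
by rewrite setIT.
Qed.

Lemma concat_is_topology k l (T : topo k) (T' : topo l) : is_topology (concat_opens T T').
Proof.
rewrite concat_opensE; apply: is_topologyI; rewrite ?inE ?preimset0 ?preimsetT ?opens0 ?opensT //.
move=> A B; rewrite !inE => /andP [AL AR] /andP [BL BR].
by rewrite !preimsetU !preimsetI !opensU ?opensI.
Qed.

Lemma down_is_topology k l (T : topo k) (T' : topo l) : is_topology (down_opens T T').
Proof.
rewrite down_opensE; apply: is_topologyI;
  rewrite ?inE ?preimset0 ?preimsetT ?opens0 ?opensT ?eqxx ?implybT //.
move=> A B; rewrite !inE => /and3P [AL AR A_down] /and3P [BL BR B_down].
by rewrite !preimsetU !preimsetI !opensU ?opensI //=; apply: down_condition_UI.
Qed.

Lemma subset_concat_opens k l (T : topo k) (T' : topo l) (U : topo (k + l)) :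
  (opens U \subset concat_opens T T') =
  refines (induced (lshift l) U) T && refines (induced (@rshift k l) U) T'.
Proof. by rewrite concat_opensE subset_setE forall_in_andb !refines_inducedE. Qed.

Lemma subset_down_opens k l (T : topo k) (T' : topo l) (U : topo (k + l)) :
  (opens U \subset down_opens T T') =
  [&& refines (induced (lshift l) U) T, refines (induced (@rshift k l) U) T' &
      setle U [set i : 'I_(k + l) | (i < k)%N] [set i : 'I_(k + l) | (k <= i)%N]].
Proof.
by rewrite down_opensE subset_setE !forall_in_andb !refines_inducedE down_condition_setle.
Qed.

Section BilinearProducts.
Variable K : fieldType.

Definition indicator n (C : {set {set 'I_n}}) : Hdeg K n := [ffun X => (opens X == C)%:R].

Definition prodH k l (C : topo k -> topo l -> {set {set 'I_(k + l)}})
    (f : Hdeg K k) (g : Hdeg K l) : Hdeg K (k + l) :=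
  [ffun X => \sum_(T : topo k) \sum_(T' : topo l) (opens X == C T T')%:R * f T * g T'].

Lemma prodH_sum k l C (I J : finType) (P : pred I) (Q : pred J) F G :
  @prodH k l C (\sum_(i | P i) F i) (\sum_(j | Q j) G j) =
  \sum_(i | P i) \sum_(j | Q j) prodH C (F i) (G j).
Proof.
apply/ffunP => X; rewrite ffunE sum_ffunE.
under eq_bigr => T _ do under eq_bigr => T' _ do
  rewrite !sum_ffunE -mulrA big_distrlr mulr_sumr.
under [RHS]eq_bigr => i _ do rewrite sum_ffunE.
under [RHS]eq_bigr => i _ do under eq_bigr => j _ do rewrite ffunE.
under eq_bigr => T _ do rewrite exchange_big /=.
rewrite exchange_big /=; apply: eq_bigr => i _.
under eq_bigr => T _ do under eq_bigr => T' _ do rewrite mulr_sumr.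
under eq_bigr => T _ do rewrite exchange_big /=.
rewrite exchange_big /=; apply: eq_bigr => j _.
by apply: eq_bigr => T _; apply: eq_bigr => T' _; rewrite mulrA.
Qed.

Lemma prodH_basis k l C (T : topo k) (T' : topo l) :
  prodH C (basis K T) (basis K T') = indicator (C T T').
Proof.
apply/ffunP => X; rewrite ffunE (bigD1 T) //= [X in _ + X]big1 => [|S neq]; last first.
  by apply: big1 => S' _; rewrite !ffunE (negbTE neq) mulr0 mul0r.
rewrite addr0 (bigD1 T') //= [X in _ + X]big1 => [|S' neq]; last first.
  by rewrite !ffunE (negbTE neq) mulr0.
by rewrite !ffunE !eqxx !mulr1 addr0.
Qed.

End BilinearProducts.

Section RibbonProducts.
Variable K : fieldType.
Variable R : forall n : nat, topo n -> Hdeg K n.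
Hypothesis HR : forall (n : nat) (T : topo n),
  basis K T = \sum_(T' : topo n | refines T' T) R T'.

Lemma indicator_ribbon n (C : {set {set 'I_n}}) :
  is_topology C -> indicator K C = \sum_(U : topo n | opens U \subset C) R U.
Proof.
move=> C_top; pose TC : topo n := exist _ C C_top.
have -> : indicator K C = basis K TC by apply/ffunP => X; rewrite !ffunE.
exact: HR.
Qed.

Lemma prodH_ribbon k l (C : topo k -> topo l -> {set {set 'I_(k + l)}})
    (Q : pred (topo (k + l))) :
    (forall T T', is_topology (C T T')) ->
    (forall T T' U, (opens U \subset C T T') =
       [&& refines (induced (lshift l) U) T, refines (induced (@rshift k l) U) T' & Q U]) ->
  forall (T : topo k) (T' : topo l), prodH C (R T) (R T') =
    \sum_(U : topo (k + l) |
      [&& T == induced (lshift l) U, T' == induced (@rshift k l) U & Q U]) R U.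
Proof.
move=> C_top subsetC T T'.
pose le (p q : topo k * topo l) := refines p.1 q.1 && refines p.2 q.2.
pose mu (p : topo k * topo l) := (#|opens p.1| + #|opens p.2|)%N.
pose F (p : topo k * topo l) := \sum_(U : topo (k + l) |
  [&& p.1 == induced (lshift l) U, p.2 == induced (@rshift k l) U & Q U]) R U.
apply: (@sum_below_inj _ _ le mu _ _ (fun p => prodH C (R p.1) (R p.2)) F _ (T, T')).
- by move=> p; rewrite /le !refines_refl.
- move=> [S S'] [T0 T0'] /andP [/= SS SS']; rewrite xpair_eqE negb_and /mu /=.
  case/orP => neq; first by rewrite -addSn leq_add ?refines_card ?subset_leq_card.
  by rewrite -addnS leq_add ?refines_card ?subset_leq_card.
move=> [T1 T1'].
transitivity (\sum_(S | refines S T1) \sum_(S' | refines S' T1') prodH C (R S) (R S')).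
  by rewrite pair_big_dep.
rewrite -prodH_sum -!HR prodH_basis indicator_ribbon //.
symmetry; rewrite /F (exchange_big_dep predT) //= [RHS]big_mkcond; apply: eq_bigr => U _.
set pU := (induced (lshift l) U, induced (@rshift k l) U).
have cond p : le p (T1, T1') &&
    [&& p.1 == induced (lshift l) U, p.2 == induced (@rshift k l) U & Q U] =
  (p == pU) && (opens U \subset C T1 T1').
  case: p => S S'; rewrite subsetC /le /pU xpair_eqE /=.
  by case: (S =P _) => [->|_]; case: (S' =P _) => [->|_]; rewrite ?eqxx /= ?andbF ?andbA.
rewrite (eq_bigl _ _ cond); case: ifP => CU.
  by under eq_bigl => p do rewrite andbT; rewrite big_pred1_eq.
by rewrite big_pred0 // => p; rewrite andbF.
Qed.

Lemma mulH_ribbon k l (T : topo k) (T' : topo l) :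
  mulH (R T) (R T') = \sum_(U : topo (k + l) |
    is_std U [set i : 'I_(k + l) | (i < k)%N] T && is_std U [set i : 'I_(k + l) | (k <= i)%N] T')
    R U.
Proof.
rewrite -[mulH _ _]/(prodH (@concat_opens k l) _ _) (@prodH_ribbon _ _ _ predT) => [||T0 T0' U].
- by apply: eq_bigl => U; rewrite is_std_lshift is_std_rshift andbT.
- exact: concat_is_topology.
by rewrite subset_concat_opens andbT.
Qed.

Lemma downH_ribbon k l (T : topo k) (T' : topo l) :
  downH (R T) (R T') = \sum_(U : topo (k + l) |
    [&& is_std U [set i : 'I_(k + l) | (i < k)%N] T, is_std U [set i : 'I_(k + l) | (k <= i)%N] T' &
        setle U [set i : 'I_(k + l) | (i < k)%N] [set i : 'I_(k + l) | (k <= i)%N]]) R U.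
Proof.
rewrite -[downH _ _]/(prodH (@down_opens k l) _ _).
rewrite (@prodH_ribbon _ _ _ (fun U => setle U [set i : 'I_(k + l) | (i < k)%N]
                                                [set i : 'I_(k + l) | (k <= i)%N])).
- by apply: eq_bigl => U; rewrite is_std_lshift is_std_rshift.
- exact: down_is_topology.
exact: subset_down_opens.
Qed.

End RibbonProducts.

Lemma setlt_complE n (S : topo n) (O : {set 'I_n}) : O \in opens S ->
  setlt S (~: O) O = [forall V in opens S, (V :&: ~: O != set0) ==> (O \subset V)].
Proof.
move=> O_open; apply/forall_inP/forall_inP => [lt_O V V_open|split_O z].
  apply/implyP => /set0Pn [z]; rewrite !inE => /andP [zV zO]; apply/subsetP => y yO.
  have zO' : z \in ~: O by rewrite inE.
  have /forall_inP /(_ y yO) /andP [/forall_inP /(_ V V_open) /implyP zy _] := lt_O z zO'.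
  exact: zy.
rewrite inE => zO; apply/forall_inP => y yO; apply/andP; split.
  apply/forall_inP => V V_open; apply/implyP => zV; apply: (subsetP _ y yO).
  by apply: (implyP (split_O V V_open)); apply/set0Pn; exists z; rewrite !inE zV.
by apply/negP => /forall_inP /(_ O O_open) /implyP /(_ yO); rewrite (negbTE zO).
Qed.

Section Glue.
Variables (n i j : nat) (O : {set 'I_n}) (f1 : 'I_i -> 'I_n) (f2 : 'I_j -> 'I_n).
Hypotheses (f1_incr : {homo f1 : x y / (x < y)%N}) (f1_im : f1 @: setT = ~: O).
Hypotheses (f2_incr : {homo f2 : x y / (x < y)%N}) (f2_im : f2 @: setT = O).

Lemma f1_notin x : (f1 x \in O) = false.
Proof. by apply/negbTE; rewrite -in_setC -f1_im imset_f. Qed.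

Lemma f2_in y : f2 y \in O.
Proof. by rewrite -f2_im imset_f. Qed.

Lemma mem_imset_f1 x (a : {set 'I_i}) : (f1 x \in f1 @: a) = (x \in a).
Proof. exact/mem_imset/increasing_inj. Qed.

Lemma mem_imset_f2 y (b : {set 'I_j}) : (f2 y \in f2 @: b) = (y \in b).
Proof. exact/mem_imset/increasing_inj. Qed.

Lemma f2_notin_imset_f1 y (a : {set 'I_i}) : (f2 y \in f1 @: a) = false.
Proof. by apply/imsetP => -[x _ f2f1]; have := f2_in y; rewrite f2f1 f1_notin. Qed.

Lemma f1_notin_imset_f2 x (b : {set 'I_j}) : (f1 x \in f2 @: b) = false.
Proof. by apply/imsetP => -[y _ f1f2]; have := f2_in y; rewrite -f1f2 f1_notin. Qed.

Lemma f1_or_f2 (z : 'I_n) : (exists x, z = f1 x) \/ (exists y, z = f2 y).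
Proof.
case: (boolP (z \in O)) => [|zO]; first by rewrite -f2_im => /imsetP [y _ ->]; right; exists y.
have : z \in ~: O by rewrite inE.
by rewrite -f1_im => /imsetP [x _ ->]; left; exists x.
Qed.

Definition glue_opens (A : topo i) (B : topo j) : {set {set 'I_n}} :=
  [set V : {set 'I_n} | [&& f1 @^-1: V \in opens A, f2 @^-1: V \in opens B &
                           (V :&: ~: O != set0) ==> (O \subset V)]].

Lemma glue_is_topology A B : is_topology (glue_opens A B).
Proof.
apply: is_topologyI;
  rewrite ?inE ?preimset0 ?preimsetT ?opens0 ?opensT ?set0I ?eqxx ?subsetT ?implybT //.
move=> V W; rewrite !inE => /and3P [V1 V2 /implyP V_split] /and3P [W1 W2 /implyP W_split].
rewrite !preimsetU !preimsetI !opensU ?opensI //=; apply/andP; split; apply/implyP.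
  rewrite setIUl => /set0Pn [z]; rewrite inE => /orP [zV|zW].
    by apply: subset_trans (subsetUl _ _); apply: V_split; apply/set0Pn; exists z.
  by apply: subset_trans (subsetUr _ _); apply: W_split; apply/set0Pn; exists z.
move=> /set0Pn [z]; rewrite !inE => /andP [/andP [zV zW] zO].
by rewrite subsetI V_split ?W_split //; apply/set0Pn; exists z; rewrite !inE ?zV ?zW.
Qed.

Definition glue (A : topo i) (B : topo j) : topo n :=
  exist _ (glue_opens A B) (glue_is_topology A B).

Lemma open_of_restrictions (U : topo n) (V W1 W2 : {set 'I_n}) : O \in opens U ->
  W1 \in opens U -> W2 \in opens U ->
  f1 @^-1: V = f1 @^-1: W1 -> f2 @^-1: V = f2 @^-1: W2 ->
  (V :&: ~: O != set0) ==> (O \subset V) -> V \in opens U.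
Proof.
move=> O_open W1_open W2_open /setP VW1 /setP VW2 /implyP V_split.
have {}VW1 x : (f1 x \in V) = (f1 x \in W1) by have := VW1 x; rewrite !inE.
have {}VW2 y : (f2 y \in V) = (f2 y \in W2) by have := VW2 y; rewrite !inE.
case: (V :&: ~: O =P set0) => [VO0|/eqP /V_split OV].
  suff -> : V = W2 :&: O by apply: opensI.
  apply/setP => z; case: (f1_or_f2 z) => -[x ->]; rewrite inE ?f1_notin ?f2_in ?andbF ?andbT.
    apply/negP => f1V; suff : f1 x \in V :&: ~: O by rewrite VO0 inE.
    by rewrite !inE f1V f1_notin.
  by rewrite VW2.
suff -> : V = W1 :|: O by apply: opensU.
apply/setP => z; case: (f1_or_f2 z) => -[x ->]; rewrite inE ?f1_notin ?f2_in ?orbF ?orbT.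
  by rewrite VW1.
exact: (subsetP OV _ (f2_in x)).
Qed.

Lemma induced_f1_glue A B : induced f1 (glue A B) = A.
Proof.
apply/opens_inj/setP => a; apply/imsetP/idP => [[V] |a_open].
  by rewrite inE => /and3P [? _ _] ->.
(* A nonempty lift of [a] meets ~O, hence must contain O. *)
exists (f1 @: a :|: (if a == set0 then set0 else O)); last first.
  by apply/setP => x; rewrite !inE mem_imset_f1; case: ifP; rewrite ?inE ?f1_notin ?orbF.
rewrite inE; apply/and3P; split.
- suff -> : f1 @^-1: (f1 @: a :|: (if a == set0 then set0 else O)) = a by [].
  by apply/setP => x; rewrite !inE mem_imset_f1; case: ifP; rewrite ?inE ?f1_notin ?orbF.
- case: ifP => _.
    suff -> : f2 @^-1: (f1 @: a :|: set0) = set0 by apply: opens0.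
    by apply/setP => y; rewrite !inE f2_notin_imset_f1.
  suff -> : f2 @^-1: (f1 @: a :|: O) = setT by apply: opensT.
  by apply/setP => y; rewrite !inE f2_in orbT.
case: ifP => [/eqP ->|_]; last by rewrite subsetUr implybT.
by rewrite imset0 setU0 set0I eqxx.
Qed.

Lemma induced_f2_glue A B : induced f2 (glue A B) = B.
Proof.
apply/opens_inj/setP => b; apply/imsetP/idP => [[V] |b_open].
  by rewrite inE => /and3P [_ ? _] ->.
exists (f2 @: b); last by apply/setP => y; rewrite !inE mem_imset_f2.
rewrite inE; apply/and3P; split.
- suff -> : f1 @^-1: (f2 @: b) = set0 by apply: opens0.
  by apply/setP => x; rewrite !inE f1_notin_imset_f2.
- suff -> : f2 @^-1: (f2 @: b) = b by [].
  by apply/setP => y; rewrite !inE mem_imset_f2.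
apply/implyP => /set0Pn [z]; rewrite !inE => /andP [/imsetP [y _ ->]].
by rewrite f2_in.
Qed.

Lemma glue_open A B : O \in opens (glue A B).
Proof.
rewrite inE; apply/and3P; split; last by rewrite subxx implybT.
- suff -> : f1 @^-1: O = set0 by apply: opens0.
  by apply/setP => x; rewrite !inE f1_notin.
- suff -> : f2 @^-1: O = setT by apply: opensT.
  by apply/setP => y; rewrite !inE f2_in.
Qed.

Lemma glue_setlt A B : setlt (glue A B) (~: O) O.
Proof.
by rewrite setlt_complE ?glue_open //; apply/forall_inP => V; rewrite inE => /and3P [].
Qed.

Lemma glue_refines (T : topo n) A B : O \in opens T ->
  refines A (induced f1 T) -> refines B (induced f2 T) -> refines (glue A B) T.
Proof.
move=> O_open /subsetP AT /subsetP BT; apply/subsetP => V; rewrite inE => /and3P [V1 V2 V_split].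
have /imsetP [W1 W1_open VW1] := AT _ V1; have /imsetP [W2 W2_open VW2] := BT _ V2.
exact: open_of_restrictions VW1 VW2 V_split.
Qed.

Lemma glue_induced (S : topo n) : O \in opens S -> setlt S (~: O) O ->
  glue (induced f1 S) (induced f2 S) = S.
Proof.
move=> O_open; rewrite setlt_complE // => /forall_inP S_split.
apply/opens_inj/setP => V; apply/idP/idP => [|V_open].
  rewrite inE => /and3P [/imsetP [W1 W1_open VW1] /imsetP [W2 W2_open VW2] V_split].
  exact: open_of_restrictions VW1 VW2 V_split.
by rewrite inE !imset_f ?S_split.
Qed.

Lemma sum_glue (V : zmodType) (T : topo n) (F : topo i -> topo j -> V) : O \in opens T ->
  \sum_(A | refines A (induced f1 T)) \sum_(B | refines B (induced f2 T)) F A B =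
  \sum_(S | [&& refines S T, O \in opens S & setlt S (~: O) O])
    F (induced f1 S) (induced f2 S).
Proof.
move=> O_open; rewrite pair_big_dep /=.
rewrite (reindex_onto (fun S => (induced f1 S, induced f2 S)) (fun p => glue p.1 p.2))
  => [|[A B] _]; last by rewrite /= induced_f1_glue induced_f2_glue.
apply: eq_bigl => S /=; apply/idP/idP => [/andP [/andP [S1 S2] /eqP <-]|/and3P [ST S_O S_lt]].
  by rewrite glue_refines ?glue_open ?glue_setlt.
by rewrite glue_induced // eqxx andbT !induced_refines.
Qed.

End Glue.

Lemma sum_refines_restrictions (V : zmodType) n i j (T : topo n) (O : {set 'I_n})
    (F : topo i -> topo j -> V) : O \in opens T ->
  \sum_(A | is_std T (~: O) A) \sum_(B | is_std T O B)
     \sum_(A' | refines A' A) \sum_(B' | refines B' B) F A' B' =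
  \sum_(S | [&& refines S T, O \in opens S & setlt S (~: O) O])
     \sum_(A | is_std S (~: O) A) \sum_(B | is_std S O B) F A B.
Proof.
move=> O_open.
have [/eqP card_i|card_i] := boolP (#|~: O| == i); last first.
  rewrite big_pred0 => [|A]; last exact: is_std_card_neq.
  by rewrite big1 // => S _; rewrite big_pred0 // => A; apply: is_std_card_neq.
have [/eqP card_j|card_j] := boolP (#|O| == j); last first.
  rewrite big1 => [|A _]; last by rewrite big_pred0 // => B; apply: is_std_card_neq.
  rewrite big1 // => S _; rewrite big1 // => A _.
  by rewrite big_pred0 // => B; apply: is_std_card_neq.
have [f1 f1_incr f1_im] := increasing_enumeration card_i.
have [f2 f2_incr f2_im] := increasing_enumeration card_j.
have std1 U A : is_std U (~: O) A = (A == induced f1 U) by apply: is_std_induced.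
have std2 U B : is_std U O B = (B == induced f2 U) by apply: is_std_induced.
rewrite (big_pred1 (induced f1 T)) // (big_pred1 (induced f2 T)) //.
rewrite (sum_glue f1_incr f1_im f2_incr f2_im) //; apply: eq_bigr => S _.
by rewrite (big_pred1 (induced f1 S)) // (big_pred1 (induced f2 S)).
Qed.

Section RibbonCoproduct.
Variable K : fieldType.
Variable R : forall n : nat, topo n -> Hdeg K n.
Hypothesis HR : forall (n : nat) (T : topo n),
  basis K T = \sum_(T' : topo n | refines T' T) R T'.

Lemma coprodH_sum n (I : finType) (P : pred I) (F : I -> Hdeg K n) i j :
  coprodH (\sum_(x | P x) F x) i j = \sum_(x | P x) coprodH (F x) i j.
Proof.
apply/ffunP => AB; rewrite ffunE sum_ffunE.
under eq_bigr => T _ do rewrite sum_ffunE mulr_suml.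
by rewrite exchange_big /=; apply: eq_bigr => x _; rewrite ffunE.
Qed.

Lemma tensH_sum i j (I J : finType) (P : pred I) (Q : pred J)
    (F : I -> Hdeg K i) (G : J -> Hdeg K j) :
  tensH (\sum_(x | P x) F x) (\sum_(y | Q y) G y) =
  \sum_(x | P x) \sum_(y | Q y) tensH (F x) (G y).
Proof.
apply/ffunP => AB; rewrite ffunE !sum_ffunE big_distrlr /=.
by apply: eq_bigr => x _; rewrite sum_ffunE; apply: eq_bigr => y _; rewrite ffunE.
Qed.

Lemma sum_basis_std n m (T : topo n) (Y : {set 'I_n}) (a : topo m) :
  \sum_(A : topo m | is_std T Y A) basis K A a = (is_std T Y a)%:R.
Proof.
case: (boolP (is_std T Y a)) => std_a.
  rewrite (bigD1 a) //= big1 => [|A /andP [_ neq]]; first by rewrite ffunE eqxx addr0.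
  by rewrite ffunE eq_sym (negbTE neq).
by apply: big1 => A std_A; rewrite ffunE; case: eqP => // eq_aA; rewrite eq_aA std_A in std_a.
Qed.

Lemma coprodH_basis n (T : topo n) i j :
  coprodH (basis K T) i j = \sum_(O in opens T)
    \sum_(A : topo i | is_std T (~: O) A) \sum_(B : topo j | is_std T O B)
      tensH (basis K A) (basis K B).
Proof.
apply/ffunP => [[a b]]; rewrite ffunE /= (bigD1 T) //= big1 => [|T0 neq]; last first.
  by rewrite ffunE (negbTE neq) mul0r.
rewrite ffunE eqxx mul1r addr0 sum_ffunE.
transitivity (\sum_(O in opens T) (is_std T (~: O) a)%:R * (is_std T O b)%:R : K).
  rewrite -sumr_const big_mkcond [RHS]big_mkcond; apply: eq_bigr => O _; rewrite inE.
  by case: (O \in opens T); case: (is_std T (~: O) a); case: (is_std T O b); rewrite ?mulr1 ?mulr0.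
apply: eq_bigr => O _.
rewrite -(sum_basis_std T (~: O) a) -(sum_basis_std T O b) big_distrlr sum_ffunE /=.
by apply: eq_bigr => A _; rewrite sum_ffunE; apply: eq_bigr => B _; rewrite [RHS]ffunE.
Qed.

Lemma coprodH_ribbon n (T : topo n) i j :
  coprodH (R T) i j = \sum_(O in opens T | setlt T (~: O) O)
    \sum_(A : topo i | is_std T (~: O) A) \sum_(B : topo j | is_std T O B)
      tensH (R A) (R B).
Proof.
move: T; apply: (sum_below_inj (@refines_refl n) (@refines_card n)) => T1.
rewrite -coprodH_sum -HR coprodH_basis.
rewrite (exchange_big_dep (mem (opens T1))) /= => [|S O ST1 /andP [O_open _]]; last first.
  exact: (subsetP ST1).
apply: eq_bigr => O O_open; rewrite -sum_refines_restrictions //.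
apply: eq_bigr => A _; apply: eq_bigr => B _; rewrite (HR A) (HR B) tensH_sum.
by apply: eq_bigr => A' _; apply: eq_bigr => B' _.
Qed.

End RibbonCoproduct.

Theorem theorem12 (K : fieldType)
  (R : forall n : nat, topo n -> Hdeg K n)
  (HR : forall (n : nat) (T : topo n),
          basis K T = \sum_(T' : topo n | refines T' T) R n T') :
  (forall (k l : nat) (T : topo k) (T' : topo l),
     mulH (R k T) (R l T') =
     \sum_(T'' : topo (k + l) | is_std T'' [set i : 'I_(k + l) | (i < k)%N] T
                                && is_std T'' [set i : 'I_(k + l) | (k <= i)%N] T')
        R (k + l) T'')
  /\
  (forall (k l : nat) (T : topo k) (T' : topo l),
     downH (R k T) (R l T') =
     \sum_(T'' : topo (k + l) | [&& is_std T'' [set i : 'I_(k + l) | (i < k)%N] T,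
                                   is_std T'' [set i : 'I_(k + l) | (k <= i)%N] T' &
                                   setle T'' [set i : 'I_(k + l) | (i < k)%N]
                                             [set i : 'I_(k + l) | (k <= i)%N]])
        R (k + l) T'')
  /\
  (forall (n : nat) (T : topo n) (i j : nat),
     coprodH (R n T) i j =
     \sum_(O in opens T | setlt T (~: O) O)
        \sum_(A : topo i | is_std T (~: O) A)
          \sum_(B : topo j | is_std T O B)
            tensH (R i A) (R j B)).
Proof.
split; first exact: mulH_ribbon.
split; first exact: downH_ribbon.
exact: coprodH_ribbon.
Qed.
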